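(* Let $d\ge 2$ and let $\mathcal F$ be an affine invariant control family of globally Lipschitz maps $\mathbb R^d\to\mathbb R^d$. Then the control system with control family $\mathcal F$ possesses the exact universal interpolation property if and only if there exists $f=(f_1,\dots,f_d)\in\mathcal F$ such that at least one component $f_j:\mathbb R^d\to\mathbb R$ is non-linear, i.e. not of the form $x\mapsto a^\top x+c$ with $a\in\mathbb R^d$, $c\in\mathbb R$.
   Context: A control family is a set $\mathcal F$ of globally Lipschitz maps $\mathbb R^d\to\mathbb R^d$ (the right-hand sides $x\mapsto f(x;\theta)$, $\theta\in\Theta$, of the control system $\dot x=f(x;\theta(t))$ with piecewise constant controls). For $g\in\mathcal F$ and $t\ge0$, $\varphi^g_t$ denotes the time-$t$ flow map $x_0\mapsto x(t)$ of $\dot x=g(x)$, $x(0)=x_0$. Let $\Phi(\mathcal F,T)$ be the set of maps $\varphi^{f_k}_{t_k}\circ\cdots\circ\varphi^{f_1}_{t_1}$ with $k\ge1$, $f_1,\dots,f_k\in\mathcal F$, $t_i\ge0$, $t_1+\cdots+t_k=T$; set $\mathcal A_{\mathcal F,T}=\bigcup_{0\le t\le T}\Phi(\mathcal F,t)$ and $\mathcal A_{\mathcal F}=\bigcup_{T\ge0}\mathcal A_{\mathcal F,T}$ (the attainable set). $\mathcal F$ is affine invariant if $f\in\mathcal F$ implies $x\mapsto Wf(Ax-b)$ belongs to $\mathcal F$ for all $W,A\in\mathbb R^{d\times d}$, $b\in\mathbb R^d$. The system has the exact universal interpolation property if for every positive integer $N$ and every data $(x_1,y_1),\dots,(x_N,y_N)$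 in $\mathbb R^d\times\mathbb R^d$ with $x_i\ne x_j$ and $y_i\ne y_j$ for $i\ne j$, there is $\varphi\in\mathcal A_{\mathcal F}$ with $\varphi(x_i)=y_i$ for all $i$. *)

From HB Require Import structures.
From mathcomp Require Import all_boot all_order all_algebra.
From mathcomp Require Import all_classical all_reals all_analysis.
Set Implicit Arguments. Unset Strict Implicit. Unset Printing Implicit Defensive.
Import Order.TTheory GRing.Theory Num.Theory.
Import numFieldNormedType.Exports.
Local Open Scope classical_set_scope.
Local Open Scope ring_scope.

Section Control.
Variables (R : realType) (d : nat).
Notation vec := 'cV[R]_d.

(* global Lipschitz continuity (w.r.t. the max norm on R^d; all norms on R^d are equivalent) *)
Definition globally_lipschitz (g : vec -> vec) : Prop :=
  exists k : R, forall x y : vec, `|g x - g y| <= k * `|x - y|.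

(* For globally
   Lipschitz g the solution exists and is unique, so this relation is the
   graph of the flow map phi^g_t. *)
Definition is_flow (g : vec -> vec) (t : R) (x0 y : vec) : Prop :=
  exists x : R -> vec,
    x 0 = x0 /\ x t = y /\ forall s : R, is_derive s 1 x (g (x s)).

Fixpoint comp_flow (s : seq ((vec -> vec) * R)) (x y : vec) : Prop :=
  match s with
  | [::] => x = y
  | (g, t) :: s' => exists z, is_flow g t x z /\ comp_flow s' z y
  end.

Definition affine_invariant (F : set (vec -> vec)) : Prop :=
  forall f, F f -> forall (W A : 'M[R]_d) (b : vec),
    F (fun x => W *m f (A *m x - b)).

Definition exact_universal_interpolation (F : set (vec -> vec)) : Prop :=
  forall (N : nat), (0 < N)%N ->
  forall (xs ys : 'I_N -> vec), injective xs -> injective ys ->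
  exists s : seq ((vec -> vec) * R),
    s <> [::] /\ (forall p, p \in s -> F p.1 /\ 0 <= p.2) /\
    forall i, comp_flow s (xs i) (ys i).

Definition component_affine (f : vec -> vec) (j : 'I_d) : Prop :=
  exists (a : vec) (c : R), forall x : vec, f x j 0 = (a^T *m x) 0 0 + c.

End Control.

From HB Require Import structures.
From mathcomp Require Import all_boot all_order all_algebra.
From mathcomp Require Import all_classical all_reals all_analysis.
From mathcomp Require Import ring lra.
Import Order.TTheory GRing.Theory Num.Theory.
Import numFieldNormedType.Exports.
Local Open Scope classical_set_scope.
Local Open Scope ring_scope.

(* If a field f of F has a non-affine component f_j, affine invariance puts into
   F every field x |-> c f_j (x_m q - p) e_k with k <> m.  Such a field only
   depends on x_m, so its flow is the shear x |-> x + t c f_j (x_m q - p) e_k,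
   and composing shears realises x |-> x + phi (x_m) e_k for every phi in the
   span V of the functions s |-> f_j (s q - p).  A linear relation
   sum_i w_i b (s_i) = 0 valid on all of V would give every restriction h of
   f_j to a line the functional equation sum_i w_i h (t + s_i u) = 0; choosing
   k with sum_i w_i s_i^k <> 0 and differentiating k times in u makes the k-th
   differences of h vanish, and for Lipschitz h this forces h to be affine.
   Hence V interpolates arbitrary values at finitely many points, and suitable
   shears first make one coordinate separate the data points and then move
   every coordinate to its target.
   Conversely, if every field is affine then, by uniqueness for linear ODEs,
   every attainable map is affine, and no affine map sends 0, e_0, 2 e_0 to
   0, e_0, e_1. *)

Lemma is_derive_ext (R : numFieldType) (V W : normedModType R) (f g : V -> W) x v df :
  f =1 g -> is_derive x v f df -> is_derive x v g df.
Proof. by move=> /funext <-. Qed.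
Arguments is_derive_ext {R V W f g x v df}.

Section RealCalculus.
Context {R : realType}.

Lemma is_derive_sum_seq (I : Type) (s : seq I) (h dh : I -> R -> R) (x : R) :
  (forall i, is_derive x (1 : R) (h i) (dh i x)) ->
  is_derive x (1 : R) (fun y => \sum_(i <- s) h i y) (\sum_(i <- s) dh i x).
Proof.
move=> D; elim: s => [|i s IH].
  by rewrite big_nil; apply: is_derive_ext (is_derive_cst 0 x 1) => y; rewrite big_nil.
by rewrite big_cons; apply: is_derive_ext (is_deriveD (D i) IH) => y; rewrite big_cons.
Qed.

Lemma is_derive_comp_affine (h : R -> R) (t s u a : R) :
  is_derive (t + s * u) (1 : R) h a -> is_derive u (1 : R) (fun v => h (t + s * v)) (a * s).
Proof.
move=> Dh; apply: (@is_derive1_comp R h (fun v => t + s * v) u a s Dh).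
have Ds : is_derive u (1 : R) (fun v => s * v) (s * 1) by exact: is_deriveZ.
by have := is_deriveD (is_derive_cst t u (1 : R)) Ds; rewrite add0r mulr1.
Qed.

Lemma is_derive_eq0 (h : R -> R) (u dh : R) :
  (forall v, h v = 0) -> is_derive u (1 : R) h dh -> dh = 0.
Proof.
move=> h0 Dh; rewrite -(@derive_val _ _ _ _ _ _ _ Dh).
have -> : h = cst 0 by apply/funext => v; rewrite h0.
exact: derive_cst.
Qed.

Lemma lipschitz_continuous (h : R -> R) k :
  (forall x y, `|h x - h y| <= k * `|x - y|) -> continuous h.
Proof.
move=> hL x; apply/cvgrPdist_lt => e e0.
have k0 : 0 <= k by have := hL 1 0; rewrite subr0 normr1 mulr1; apply: le_trans.
apply/nbhs_ballP; exists (e / (k + 1)) => /=; first by rewrite divr_gt0 // ltr_wpDl.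
move=> y; rewrite /ball /= => xy.
have : `|x - y| * (k + 1) < e by rewrite -ltr_pdivlMr // ltr_wpDl.
apply: le_lt_trans; apply: le_trans (hL x y) _.
by rewrite mulrDr mulr1 mulrC lerDl.
Qed.

Local Notation mu := (@lebesgue_measure R).

Let integral_from (h : R -> R) (a x : R) := \int[mu]_(t in `[a, x]) h t.

Let continuous_integrable_segment (h : R -> R) a b : continuous h ->
  mu.-integrable `[a, b] (EFin \o h).
Proof.
move=> ch; apply: continuous_compact_integrable; first exact: segment_compact.
by apply: continuous_subspaceT => x; exact: ch.
Qed.

Let integral_fromD (h : R -> R) a b x : continuous h -> a <= b -> b <= x ->
  integral_from h a x = integral_from h a b + integral_from h b x.
Proof.
move=> ch ab bx; rewrite /integral_from.
have := @Rintegral_itvB R h (BLeft a) (BRight x) b (continuous_integrable_segment h a x ch).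
rewrite !bnd_simp => /(_ ab bx) E.
rewrite -(@Rintegral_itv_obnd_cbnd R b (BRight x) h); last first.
  apply: integrableS (continuous_integrable_segment h b x ch) => //=.
  by apply: subset_itvr; rewrite bnd_simp.
by rewrite -E addrC subrK.
Qed.

(* [integral_from h a x - integral_from h a 0] does not depend on the base
   point [a <= min x 0]; choosing [a] below [x] turns FTC1 into a derivative
   at every point. *)
Lemma continuous_antiderivative (h : R -> R) : continuous h ->
  exists H : R -> R, forall x, is_derive x (1 : R) H (h x).
Proof.
move=> ch.
have base_free a x : a <= Num.min x 0 -> integral_from h a x - integral_from h a 0 =
    integral_from h (Num.min x 0) x - integral_from h (Num.min x 0) 0.
  move=> am; rewrite (@integral_fromD h a (Num.min x 0) x) ?ge_min ?lexx //.
  by rewrite (@integral_fromD h a (Num.min x 0) 0) ?ge_min ?lexx ?orbT //; ring.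
pose H x := integral_from h (- (`|x| + 1)) x - integral_from h (- (`|x| + 1)) 0.
have HE a x : a <= Num.min x 0 -> H x = integral_from h a x - integral_from h a 0.
  move=> am; rewrite /H base_free ?base_free // le_min.
  by have := ler_norm x; have := ler_norm (- x); rewrite normrN => *; apply/andP; split; lra.
exists H => x; pose a := - (`|x| + 2).
have ax : a < x by have := ler_norm (- x); rewrite normrN /a; lra.
have [dF F'] := continuous_FTC1_closed (ltr_pwDr ltr01 (lexx x))
  (continuous_integrable_segment h a (x + 1) ch) ax (ch x).
have DF : is_derive x (1 : R) (integral_from h a) (h x).
  by apply: DeriveDef; [exact: dF | rewrite -derive1E].
have := is_deriveB DF (is_derive_cst (integral_from h a 0) x 1); rewrite subr0.
apply: near_eq_is_derive; apply/nbhs_ballP; exists 1 => //= y; rewrite /ball /= => xy.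
rewrite (HE a y) // le_min.
have := ler_norm (x - y); have := ler_norm (- (x - y)); rewrite normrN.
by have := ler_norm x; have := ler_norm (- x); rewrite normrN /a => *; apply/andP; split; lra.
Qed.

End RealCalculus.
Arguments is_derive_comp_affine {R h t s u a}.
Arguments lipschitz_continuous {R h k}.
Arguments continuous_antiderivative {R h}.

Section FiniteDifferences.
Context {R : realType}.
Implicit Types (h : R -> R) (ds : seq R).

Fixpoint findiff ds h (t : R) : R :=
  if ds is e :: ds' then findiff ds' h (t + e) - findiff ds' h t else h t.

Definition findiff_eq0 (k : nat) h := forall ds, size ds = k -> forall t, findiff ds h t = 0.

Lemma findiffZ ds (c : R) h t : findiff ds (fun x => c * h x) t = c * findiff ds h t.
Proof. by elim: ds t => //= e ds IH t; rewrite !IH mulrBr. Qed.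

Lemma is_derive_findiff ds {h dh : R -> R} :
  (forall x, is_derive x (1 : R) h (dh x)) ->
  forall t, is_derive t (1 : R) (findiff ds h) (findiff ds dh t).
Proof.
move=> D; elim: ds => [|e ds IH] t /=; first exact: D.
have De : is_derive t (1 : R) (fun y => findiff ds h (y + e)) (findiff ds dh (t + e)).
  have := is_derive_comp_affine (IH (e + 1 * t)).
  by rewrite mulr1 mul1r addrC; apply: is_derive_ext => y /=; rewrite mul1r addrC.
exact: is_deriveB De (IH t).
Qed.

Lemma is_derive_findiff_param ds (h : R -> R -> R) (dh : R -> R) u :
  (forall x, is_derive u (1 : R) (h x) (dh x)) ->
  forall t, is_derive u (1 : R) (fun v => findiff ds (h^~ v) t) (findiff ds dh t).
Proof.
move=> D; elim: ds => [|e ds IH] t /=; first exact: D.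
exact: is_deriveB (IH (t + e)) (IH t).
Qed.

Lemma findiff_eq0S k h : findiff_eq0 k h -> findiff_eq0 k.+1 h.
Proof. by move=> Hk [|e ds] //= [sz] t; rewrite !Hk // subrr. Qed.

Lemma findiff_eq0_leq k m h : (k <= m)%N -> findiff_eq0 k h -> findiff_eq0 m h.
Proof.
move=> /subnK <-; elim: (m - k)%N => [|n IH] Hk; first by rewrite add0n.
by rewrite addSn; apply: findiff_eq0S; exact: IH.
Qed.

Lemma natmul_bounded_eq0 (y B : R) : (forall n : nat, n%:R * `|y| <= B) -> y = 0.
Proof.
move=> yB; apply/eqP; apply/negPn/negP => y0.
have yp : 0 < `|y| by rewrite normr_gt0.
have := truncnS_gt (B / `|y|); rewrite ltr_pdivrMr // => /lt_le_trans /(_ (yB _)).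
by rewrite ltxx.
Qed.

Section Lipschitz.
Context {h : R -> R} {L : R}.
Hypothesis hL : forall x y, `|h x - h y| <= L * `|x - y|.

Lemma lipschitz_findiff_bounded e ds : exists B, forall t, `|findiff (e :: ds) h t| <= B.
Proof.
elim: ds e => [|e' ds IH] e.
  by exists (L * `|e|) => t /=; apply: le_trans (hL _ _) _; rewrite addrAC subrr add0r.
have [B hB] := IH e'; exists (B + B) => t.
by apply: le_trans (ler_normB (findiff (e' :: ds) h (t + e)) _) _; apply: lerD; exact: hB.
Qed.

(* If all differences of order [k + 1] vanish, a difference [g] of order [k]
   is constant, so the differences [w] of order [k - 1] grow linearly:
   [w (n * e) = w 0 + n * g 0]; boundedness of [w] forces [g = 0]. *)
Lemma lipschitz_findiff_eq0_pred k : (2 <= k)%N ->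
  findiff_eq0 k.+1 h -> findiff_eq0 k h.
Proof.
move=> k2 Hk [|e [|e' ds]] sz t; rewrite -?sz // in k2.
pose w := findiff (e' :: ds) h.
pose g := findiff (e :: e' :: ds) h.
have g_const x : g x = g 0.
  apply/eqP; rewrite -subr_eq0; apply/eqP.
  by have := Hk (x :: e :: e' :: ds) (congr1 S sz) 0; rewrite /= add0r.
have w_lin (n : nat) : w (n%:R * e) = w 0 + n%:R * g 0.
  elim: n => [|n IH]; first by rewrite !mul0r addr0.
  have E : g (n%:R * e) = w (n%:R * e + e) - w (n%:R * e) by [].
  rewrite g_const in E.
  rewrite mulrSr mulrDl mul1r (_ : w (_ + e) = w (n%:R * e) + g 0); last by rewrite E; ring.
  by rewrite IH; ring.
have [B hB] := lipschitz_findiff_bounded e' ds.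
suff g00 : g 0 = 0 by rewrite -g00; exact: g_const.
apply: (@natmul_bounded_eq0 _ (B + B)) => n.
rewrite -(normr_nat R n) -normrM (_ : _ * _ = w (n%:R * e) - w 0); last by rewrite w_lin; ring.
by apply: le_trans (ler_normB _ _) _; apply: lerD; exact: hB.
Qed.

Lemma lipschitz_findiff_eq0_2 k : findiff_eq0 k h -> findiff_eq0 2 h.
Proof.
case: (leqP k 2) => [k2|]; first exact: findiff_eq0_leq.
move=> /subnK <-; elim: (k - 3)%N => [|n IH] Hk.
  exact: lipschitz_findiff_eq0_pred.
apply: IH; apply: lipschitz_findiff_eq0_pred; first by rewrite !addnS.
by rewrite -addSn.
Qed.

End Lipschitz.

(* Additivity makes [g] vanish on the integers; then
   [n * g x = g (n * x - floor (n * x))] is bounded by the Lipschitz constant. *)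
Lemma lipschitz_additive_eq0 (g : R -> R) L :
  (forall x y, `|g x - g y| <= L * `|x - y|) ->
  (forall a b, g (a + b) = g a + g b) -> g 1 = 0 -> forall x, g x = 0.
Proof.
move=> gL gD g1 x.
have L0 : 0 <= L by have := gL 1 0; rewrite subr0 normr1 mulr1; apply: le_trans.
have g0 : g 0 = 0 by have := gD 0 0; rewrite addr0; lra.
have gMn (n : nat) y : g (n%:R * y) = n%:R * g y.
  by elim: n => [|n IH]; rewrite ?mul0r // mulrSr mulrDl mul1r gD IH mulrDl mul1r.
have gN y : g (- y) = - g y by apply/eqP; rewrite -subr_eq0 opprK addrC -gD subrr g0.
have gz (z : int) : g z%:~R = 0.
  have gn (n : nat) : g n%:R = 0 by rewrite -[n%:R]mulr1 gMn g1 mulr0.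
  by case: z => n; rewrite ?NegzE ?mulrNz ?gN gn ?oppr0.
apply: (@natmul_bounded_eq0 _ L) => n.
rewrite -normr_nat -normrM -gMn.
pose m := Num.floor (n%:R * x).
rewrite -(subrK m%:~R (n%:R * x)) gD gz addr0 -[g _]subr0 -g0.
apply: le_trans (gL _ _) _; rewrite subr0 -[leRHS]mulr1; apply: ler_wpM2l => //.
have := floor_le (n%:R * x); have : n%:R * x < (m + 1)%:~R by rewrite -floor_lt_int ltrDl.
by rewrite intrD => *; rewrite ger0_norm; lra.
Qed.

Lemma lipschitz_findiff_eq0_affine h L k :
  (forall x y, `|h x - h y| <= L * `|x - y|) -> findiff_eq0 k h ->
  forall x, h x = h 0 + x * (h 1 - h 0).
Proof.
move=> hL /(lipschitz_findiff_eq0_2 hL) H2.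
pose g x := h x - h 0 - x * (h 1 - h 0).
suff g0 x : g x = 0 by move=> x; move: (g0 x); rewrite /g; lra.
apply: (@lipschitz_additive_eq0 g (L + `|h 1 - h 0|)) => [{}x y||]; last by rewrite /g mul1r; ring.
  rewrite (_ : g x - g y = (h x - h y) - (x - y) * (h 1 - h 0)); last by rewrite /g; ring.
  by apply: le_trans (ler_normB _ _) _; rewrite normrM mulrDl [X in _ <= _ + X]mulrC lerD.
move=> a b; have := H2 [:: a; b] erefl 0; rewrite /= !add0r /g => E.
by rewrite (_ : h (a + b) = h a + h b - h 0); [ring | lra].
Qed.

End FiniteDifferences.

(* A weight vanishing against every power on distinct nodes vanishes against
   every polynomial, in particular against the one vanishing on all nodes
   but [a]. *)
Lemma moment_neq0 (R : fieldType) (nodes : seq R) (w : R -> R) a :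
  uniq nodes -> a \in nodes -> w a != 0 ->
  exists k, \sum_(x <- nodes) w x * x ^+ k != 0.
Proof.
move=> uniq_nodes a_node wa; apply/not_existsP => /(_ _) /negP /negbNE /eqP moment0.
have poly0 (p : {poly R}) : \sum_(x <- nodes) w x * p.[x] = 0.
  under eq_bigr do rewrite horner_coef mulr_sumr.
  rewrite exchange_big big1 //= => i _.
  under eq_bigr do rewrite mulrCA.
  by rewrite -mulr_sumr moment0 mulr0.
pose p := \prod_(y <- nodes | y != a) ('X - y%:P).
have := poly0 p; rewrite (bigD1_seq a) //= big_seq_cond big1 => [|x /andP[xn xa]]; last first.
  by rewrite horner_prod big_mkcond (bigD1_seq x) //= xa hornerXsubC subrr mul0r mulr0.
rewrite addr0 => /eqP; rewrite mulf_eq0 (negbTE wa) horner_prod /=; apply/negP.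
by rewrite prodf_seq_neq0; apply/allP => y _; apply/implyP; rewrite hornerXsubC subr_eq0 eq_sym.
Qed.
Arguments moment_neq0 {R nodes w a}.

Section LinearRelation.
Context {R : realType}.
Context {h H : R -> R} {nodes : seq R} {w : R -> R}.
Hypothesis H_h : forall x, is_derive x (1 : R) H (h x).
Hypothesis relation : forall t u, \sum_(x <- nodes) w x * h (t + x * u) = 0.

Let Phi k u t := \sum_(x <- nodes) w x * x ^+ k * h (t + x * u).
Let Psi k u t := \sum_(x <- nodes) w x * x ^+ k * H (t + x * u).

Let is_derive_Psi_t k u t : is_derive t (1 : R) (Psi k u) (Phi k u t).
Proof.
apply: (@is_derive_sum_seq _ _ _ (fun x y => w x * x ^+ k * H (y + x * u))
  (fun x y => w x * x ^+ k * h (y + x * u))) => x; apply: is_deriveZ.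
have := is_derive_comp_affine (H_h (x * u + 1 * t)).
by rewrite mulr1 mul1r addrC; apply: is_derive_ext => y /=; rewrite mul1r addrC.
Qed.

Let is_derive_Psi_u k u t : is_derive u (1 : R) (Psi k ^~ t) (Phi k.+1 u t).
Proof.
apply: (@is_derive_sum_seq _ _ _ (fun x v => w x * x ^+ k * H (t + x * v))
  (fun x v => w x * x ^+ k.+1 * h (t + x * v))) => x.
rewrite exprSr (_ : _ * _ * h _ = w x * x ^+ k * (h (t + x * u) * x)); last by ring.
exact: is_deriveZ (is_derive_comp_affine (H_h _)).
Qed.

(* Differences of order [k] of [Phi k u] vanish: integrate in [t] to [Psi k u],
   whose differences of order [k] are then constant in [t]; one more difference
   kills them, and differentiating in [u] yields [Phi k.+1]. *)
Let findiff_Phi k u : findiff_eq0 k (Phi k u).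
Proof.
elim: k u => [|k IH] u.
  by case=> // _ t; rewrite /= /Phi; under eq_bigr do rewrite expr0 mulr1.
case=> [|e ds] //= [sz] t.
have Psi_const v : findiff ds (Psi k v) (t + e) - findiff ds (Psi k v) t = 0.
  apply/eqP; rewrite subr_eq0; apply/eqP; apply: is_derive_0_is_cst => x.
  by have := is_derive_findiff ds (is_derive_Psi_t k v) x; rewrite (IH v ds sz x).
have Dpar s := @is_derive_findiff_param _ ds (fun x v => Psi k v x) _ u
  (is_derive_Psi_u k u) s.
exact: is_derive_eq0 Psi_const (is_deriveB (Dpar (t + e)) (Dpar t)).
Qed.

Lemma relation_findiff_eq0 k : \sum_(x <- nodes) w x * x ^+ k != 0 -> findiff_eq0 k h.
Proof.
move=> mk ds sz t; have := findiff_Phi k 0 ds sz t.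
rewrite (_ : Phi k 0 = fun y => (\sum_(x <- nodes) w x * x ^+ k) * h y).
  by rewrite findiffZ => /eqP; rewrite mulf_eq0 (negbTE mk) => /eqP.
by apply/funext => y; rewrite /Phi mulr_suml; apply: eq_bigr => x _; rewrite mulr0 addr0.
Qed.

End LinearRelation.

Lemma lipschitz_relation_affine (R : realType) (h : R -> R) L (nodes : seq R) w a :
  (forall x y, `|h x - h y| <= L * `|x - y|) ->
  uniq nodes -> a \in nodes -> w a != 0 ->
  (forall t u, \sum_(x <- nodes) w x * h (t + x * u) = 0) ->
  forall x, h x = h 0 + x * (h 1 - h 0).
Proof.
move=> hL uniq_nodes a_node wa rel.
have [H H_h] := continuous_antiderivative (lipschitz_continuous hL).
have [k mk] := moment_neq0 uniq_nodes a_node wa.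
exact: lipschitz_findiff_eq0_affine _ _ _ hL (relation_findiff_eq0 H_h rel _ mk).
Qed.
Arguments lipschitz_relation_affine {R h L nodes w a}.

Lemma mx_entry_le_norm {R : realDomainType} {m n : nat} (M : 'M[R]_(m, n)) i l :
  `|M i l| <= `|M|.
Proof.
rewrite [leRHS]/Num.Def.normr /= mx_normrE.
by apply: le_trans; last exact: (le_bigmax _ _ (i, l)).
Qed.

Section AffineComponent.
Context {R : realType} {d : nat}.
Local Notation vec := 'cV[R]_d.

(* Affine on lines through [0] gives homogeneity of [G := g - g 0], the line
   through [x] and [y] evaluated at the midpoint gives additivity. *)
Lemma affine_on_lines_affine (g : vec -> R) :
  (forall p q t, g (p + t *: q) = g p + t * (g (p + q) - g p)) ->
  exists (a : vec) (c : R), forall x, g x = (a^T *m x) 0 0 + c.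
Proof.
move=> g_line; pose G x := g x - g 0.
have GZ t x : G (t *: x) = t * G x by rewrite /G -[t *: x]add0r g_line add0r; ring.
have G0 : G 0 = 0 by rewrite /G subrr.
have GD x y : G (x + y) = G x + G y.
  have := g_line x (y - x) 2^-1; rewrite [x + (y - x)]addrCA subrr addr0.
  rewrite (_ : x + 2^-1 *: (y - x) = 2^-1 *: (x + y)); last first.
    by apply/matrixP => i l; rewrite !mxE; field.
  by have := GZ 2^-1 (x + y); rewrite /G => *; lra.
exists (\col_i G (delta_mx i 0)), (g 0) => x.
rewrite (_ : g x = G x + g 0); last by rewrite /G; ring.
congr (_ + _); rewrite {1}(matrix_sum_delta x) (big_morph G GD G0) mxE.
apply: eq_bigr => i _; rewrite big_ord1 GZ !mxE mulrC.
by rewrite (ord1 (0 : 'I_1)).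
Qed.

Definition line_comp (f : vec -> vec) (j : 'I_d) (q p : vec) (s : R) : R :=
  f (s *: q - p) j 0.

(* A relation among the [line_comp f j q p] would hold for every restriction
   [t |-> f (p0 + t *: q0) j 0], making all of them affine. *)
Lemma nonaffine_no_relation (f : vec -> vec) K j :
  (forall x y, `|f x - f y| <= K * `|x - y|) -> ~ component_affine f j ->
  forall (nodes : seq R) (w : R -> R) a, uniq nodes -> a \in nodes -> w a != 0 ->
  exists q p, \sum_(s <- nodes) w s * line_comp f j q p s != 0.
Proof.
move=> fL nonaff nodes w a uniq_nodes a_node wa.
apply/not_existsP => no_rel; apply: nonaff.
have rel q p : \sum_(s <- nodes) w s * line_comp f j q p s = 0.
  by apply/eqP/negP => nz; apply: (no_rel q); exists p; exact/negP.
apply: affine_on_lines_affine => p0 q0.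
pose h t := f (p0 + t *: q0) j 0.
have hL x y : `|h x - h y| <= K * `|q0| * `|x - y|.
  rewrite /h (_ : _ - _ = (f (p0 + x *: q0) - f (p0 + y *: q0)) j 0); last by rewrite !mxE.
  apply: le_trans (mx_entry_le_norm _ j 0) _; apply: le_trans (fL _ _) _.
  by rewrite opprD addrACA subrr add0r -scalerBl normrZ le_eqVlt; apply/orP; left; apply/eqP; ring.
have := lipschitz_relation_affine hL uniq_nodes a_node wa; rewrite /h.
rewrite scale0r addr0 scale1r; apply => t u; rewrite -[RHS](rel (u *: q0) (- (p0 + t *: q0))).
apply: eq_bigr => s _; congr (_ * f _ j 0).
by apply/matrixP => i l; rewrite !mxE; ring.
Qed.

End AffineComponent.
Arguments nonaffine_no_relation {R d f K j}.

Section Interpolation.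
Context {R : fieldType} (P : set (R -> R)).
Hypothesis P0 : P (fun=> 0).
Hypothesis PD : forall f g, P f -> P g -> P (fun s => f s + g s).
Hypothesis PZ : forall c f, P f -> P (fun s => c * f s).
Hypothesis P_no_relation : forall (nodes : seq R) (w : R -> R) a,
  uniq nodes -> a \in nodes -> w a != 0 -> exists2 b, P b & \sum_(s <- nodes) w s * b s != 0.

Let P_sum (I : Type) (r : seq I) (F : I -> R -> R) :
  (forall i, P (F i)) -> P (fun s => \sum_(i <- r) F i s).
Proof.
move=> PF; elim: r => [|i r IH]; first by under [X in P X]funext do rewrite big_nil.
by under [X in P X]funext do rewrite big_cons; exact: PD.
Qed.

Let sum_delta (nodes : seq R) (b : R -> R) s : uniq nodes -> s \in nodes ->
  \sum_(r <- nodes) b r * (s == r)%:R = b s.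
Proof.
move=> uniq_nodes s_node; rewrite (bigD1_seq s) //= eqxx mulr1 big1 ?addr0 // => r rs.
by rewrite eq_sym (negbTE rs) mulr0.
Qed.

(* Given the Lagrange functions [e r] of [rest], a [b] in [P] violating
   [b a = \sum_r b r * e r a] yields [b - \sum_r b r * e r], vanishing on
   [rest] but not at [a]. *)
Let bump {a rest} {e : R -> R -> R} : a \notin rest -> uniq rest ->
  (forall r, P (e r)) -> (forall r, {in rest, e r =1 fun s => (s == r)%:R}) ->
  exists psi, [/\ P psi, {in rest, psi =1 fun=> 0} & psi a = 1].
Proof.
move=> a_rest uniq_rest Pe e_delta.
pose w s := if s == a then -1 else e s a.
have [b Pb] : exists2 b, P b & \sum_(s <- a :: rest) w s * b s != 0.
  apply: P_no_relation (mem_head _ _) _; first by rewrite /= a_rest.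
  by rewrite /w eqxx oppr_eq0 oner_eq0.
rewrite big_cons /w eqxx mulN1r.
rewrite (eq_big_seq (fun r => e r a * b r)) => [rel|r r_rest]; last first.
  by rewrite ifF //; apply: contraNF a_rest => /eqP <-.
pose g s := b s - \sum_(r <- rest) b r * e r s.
have g_rest : {in rest, g =1 fun=> 0}.
  move=> s s_rest; rewrite /g (eq_big_seq (fun r => b r * (s == r)%:R)).
    by rewrite sum_delta // subrr.
  by move=> r r_rest; rewrite e_delta.
have ga : g a != 0.
  apply: contraNneq rel => /eqP; rewrite /g subr_eq0 => /eqP ->.
  by rewrite addrC subr_eq0; apply/eqP/eq_bigr => r _; rewrite mulrC.
exists (fun s => (g a)^-1 * g s); split; last by rewrite mulVf.
  apply: PZ; rewrite (_ : g = fun s => b s + -1 * \sum_(r <- rest) b r * e r s).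
    by apply: PD => //; apply: PZ; apply: P_sum => r; exact: PZ.
  by apply/funext => s; rewrite mulN1r.
by move=> s /g_rest ->; rewrite mulr0.
Qed.

Lemma interpolation (nodes : seq R) : uniq nodes ->
  forall val : R -> R, exists2 phi, P phi & {in nodes, phi =1 val}.
Proof.
elim: nodes => [|a rest IH] /=; first by move=> _ val; exists (fun=> 0).
move=> /andP[a_rest uniq_rest] val.
have delta r : exists phi, P phi /\ {in rest, phi =1 fun s => (s == r)%:R}.
  by have [phi] := IH uniq_rest (fun s => (s == r)%:R); exists phi.
have [e He] := choice delta.
have [psi [Ppsi psi_rest psi_a]] := bump a_rest uniq_rest (fun r => (He r).1) (fun r => (He r).2).
exists (fun s => \sum_(r <- rest) val r * e r s + (val a - \sum_(r <- rest) val r * e r a) * psi s).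
  apply: PD; last exact: PZ.
  by apply: P_sum => r; apply: PZ; exact: (He r).1.
move=> s; rewrite in_cons => /orP[/eqP -> | s_rest]; first by rewrite psi_a mulr1 addrC subrK.
rewrite psi_rest // mulr0 addr0 (eq_big_seq (fun r => val r * (s == r)%:R)).
  exact: sum_delta.
by move=> r r_rest; rewrite (He r).2.
Qed.

End Interpolation.

Lemma is_derive_mxP {R : realType} {m n : nat} (X : R -> 'M[R]_(m, n)) s (D : 'M[R]_(m, n)) :
  is_derive s (1 : R) X D <-> forall i l, is_derive s (1 : R) (fun t => X t i l) (D i l).
Proof.
split=> [DX i l | DX].
  have dX : derivable X s 1 by case: DX.
  have := @derive_val _ _ _ _ _ _ _ DX; rewrite derive_mx // => E.
  by apply: DeriveDef; [move/derivable_mxP: dX; apply | rewrite -E mxE].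
have dX : derivable X s 1 by apply/derivable_mxP => i l; case: (DX i l).
apply: DeriveDef; rewrite // derive_mx //.
by apply/matrixP => i l; rewrite mxE; exact: derive_val.
Qed.

Section Attainable.
Context {R : realType} {d : nat}.
Local Notation vec := 'cV[R]_d.
Implicit Types (F : set (vec -> vec)) (Phi Psi : vec -> vec).

Lemma comp_flow_cat (s1 s2 : seq ((vec -> vec) * R)) x y z :
  comp_flow s1 x y -> comp_flow s2 y z -> comp_flow (s1 ++ s2) x z.
Proof.
elim: s1 x => [|[g t] s1 IH] x /=; first by move=> ->.
by move=> [w [gw s1w]] s2z; exists w; split => //; exact: IH.
Qed.

Definition attainable F Phi := exists s : seq ((vec -> vec) * R),
  (forall p, p \in s -> F p.1 /\ 0 <= p.2) /\ forall x, comp_flow s x (Phi x).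

Lemma attainable_id F : attainable F id.
Proof. by exists [::]. Qed.

Lemma attainable_comp {F Phi Psi} :
  attainable F Phi -> attainable F Psi -> attainable F (Psi \o Phi).
Proof.
move=> [s1 [F1 c1]] [s2 [F2 c2]]; exists (s1 ++ s2); split.
  by move=> p; rewrite mem_cat => /orP[]; [exact: F1 | exact: F2].
by move=> x; apply: comp_flow_cat (c1 x) (c2 _).
Qed.

Lemma is_flow_translation (g : vec -> vec) (t : R) x :
  (forall u : R, g (x + u *: g x) = g x) -> is_flow g t x (x + t *: g x).
Proof.
move=> g_const; exists (fun u => x + u *: g x); split; first by rewrite scale0r addr0.
split=> // u; rewrite g_const; apply/is_derive_mxP => i l.
have Du : is_derive u (1 : R) (fun v => g x i l * v) (g x i l * 1) by exact: is_deriveZ.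
rewrite mulr1 in Du.
have := is_deriveD (is_derive_cst (x i l) u (1 : R)) Du; rewrite add0r.
by apply: is_derive_ext => v; rewrite !mxE mulrC.
Qed.

Definition shear (k m : 'I_d) (phi : R -> R) (x : vec) : vec :=
  x + phi (x m 0) *: delta_mx k 0.

Lemma shear_entry k m phi x i :
  shear k m phi x i 0 = x i 0 + phi (x m 0) * (i == k)%:R.
Proof. by rewrite !mxE andbT. Qed.

Lemma shear_fix k m phi x i : i != k -> shear k m phi x i 0 = x i 0.
Proof. by move=> ik; rewrite shear_entry (negbTE ik) mulr0 addr0. Qed.

Lemma shear_comp k m phi psi x : k != m ->
  shear k m psi (shear k m phi x) = shear k m (fun s => phi s + psi s) x.
Proof. by move=> km; rewrite {1}/shear shear_fix 1?eq_sym // /shear scalerDl addrA. Qed.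

Lemma shearK k m phi : k != m -> cancel (shear k m phi) (shear k m (fun s => - phi s)).
Proof.
by move=> km x; rewrite shear_comp //; under eq_fun do rewrite subrr; rewrite /shear scale0r addr0.
Qed.

Section ShearFields.
Variables (F : set (vec -> vec)) (f : vec -> vec) (j : 'I_d).
Hypothesis F_aff : affine_invariant F.
Hypothesis Ff : F f.

Definition shear_field k m (c : R) (q p : vec) : vec -> vec :=
  fun x => (c *: delta_mx k j) *m f ((q *m delta_mx 0 m) *m x - p).

Lemma shear_fieldE k m c q p x :
  shear_field k m c q p x = (c * line_comp f j q p (x m 0)) *: delta_mx k 0.
Proof.
have rowmx (n : nat) (y : 'cV[R]_n) i : delta_mx 0 i *m y = (y i 0)%:M.
  by rewrite -rowE [LHS]mx11_scalar !mxE.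
rewrite /shear_field -mulmxA rowmx mul_mx_scalar -scalemxAl -(mul_delta_mx (0 : 'I_1) k j).
by rewrite -mulmxA rowmx mul_mx_scalar scalerA.
Qed.

Lemma F_shear_field k m c q p : F (shear_field k m c q p).
Proof. exact: F_aff. Qed.

Lemma is_flow_shear_field k m c q p x : k != m ->
  is_flow (shear_field k m c q p) 1 x (shear k m (fun s => c * line_comp f j q p s) x).
Proof.
move=> km; rewrite /shear -shear_fieldE -[X in x + X]scale1r.
apply: is_flow_translation => s; rewrite !shear_fieldE.
by rewrite !mxE eq_sym (negbTE km) /= mulr0 mulr0 addr0.
Qed.

Definition line_span (phi : R -> R) := exists Ls : seq (R * (vec * vec)),
  phi = fun s => \sum_(l <- Ls) l.1 * line_comp f j l.2.1 l.2.2 s.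

Lemma line_span0 : line_span (fun=> 0).
Proof. by exists [::]; apply/funext => s; rewrite big_nil. Qed.

Lemma line_spanD phi psi : line_span phi -> line_span psi -> line_span (fun s => phi s + psi s).
Proof. by move=> [L1 ->] [L2 ->]; exists (L1 ++ L2); apply/funext => s; rewrite big_cat. Qed.

Lemma line_spanZ c phi : line_span phi -> line_span (fun s => c * phi s).
Proof.
move=> [L ->]; exists [seq (c * l.1, l.2) | l <- L]; apply/funext => s.
by rewrite big_map mulr_sumr; apply: eq_bigr => l _; rewrite mulrA.
Qed.

Lemma attainable_shear k m phi : k != m -> line_span phi -> attainable F (shear k m phi).
Proof.
move=> km [L ->]; elim: L => [|l L IH].
  rewrite (_ : shear _ _ _ = id); first exact: attainable_id.
  by apply/funext => x; rewrite /shear /= big_nil scale0r addr0.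
have atom : attainable F (shear k m (fun s => l.1 * line_comp f j l.2.1 l.2.2 s)).
  exists [:: (shear_field k m l.1 l.2.1 l.2.2, 1)]; split.
    by move=> p; rewrite inE => /eqP ->; split; [exact: F_shear_field | exact: ler01].
  by move=> x /=; eexists; split; [exact: is_flow_shear_field | ].
have := attainable_comp atom IH.
by congr attainable; apply/funext => x /=; rewrite shear_comp // /shear big_cons.
Qed.

Variable K : R.
Hypothesis fL : forall x y, `|f x - f y| <= K * `|x - y|.
Hypothesis nonaffine : ~ component_affine f j.

Lemma shear_interpolation k m (nodes : seq R) : k != m -> uniq nodes ->
  forall val : R -> R, exists phi, [/\ attainable F (shear k m phi),
    attainable F (shear k m (fun s => - phi s)) & {in nodes, phi =1 val}].
Proof.
move=> km uniq_nodes val.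
have no_rel nodes' w a : uniq nodes' -> a \in nodes' -> w a != 0 ->
    exists2 b, line_span b & \sum_(s <- nodes') w s * b s != 0.
  move=> uniq' a_node wa.
  have [q [p nz]] := nonaffine_no_relation fL nonaffine _ _ _ uniq' a_node wa.
  exists (line_comp f j q p) => //; exists [:: (1, (q, p))].
  by apply/funext => s; rewrite big_seq1 mul1r.
have [phi span_phi phi_val] :=
  interpolation line_span line_span0 line_spanD line_spanZ no_rel nodes uniq_nodes val.
exists phi; split => //; apply: attainable_shear => //.
rewrite (_ : (fun s => - phi s) = fun s => -1 * phi s); first exact: line_spanZ.
by apply/funext => s; rewrite mulN1r.
Qed.

End ShearFields.
End Attainable.

Lemma natr_dist_ge1 (R : realDomainType) {a b : nat} : a != b -> 1 <= `|a%:R - b%:R : R|.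
Proof.
rewrite neq_ltn ler_normr => /orP[] lt; apply/orP; [right | left];
  by move: lt; rewrite -(ler_nat R) -addn1 natrD => ?; lra.
Qed.

Section Steering.
Context {R : realType} {d : nat}.
Local Notation vec := 'cV[R]_d.
Variables (F : set (vec -> vec)) (f : vec -> vec) (j : 'I_d) (K : R).
Hypothesis F_aff : affine_invariant F.
Hypothesis Ff : F f.
Hypothesis fL : forall x y, `|f x - f y| <= K * `|x - y|.
Hypothesis nonaffine : ~ component_affine f j.

Let shear_interp := shear_interpolation F f j F_aff Ff K fL nonaffine.

Definition attainable_bij (Phi : vec -> vec) :=
  exists Psi, [/\ attainable F Phi, attainable F Psi & cancel Phi Psi].

(* Shifting coordinate [k] by [C] times the rank of the value of coordinate
   [m], with [C] exceeding every spread of coordinate [k], makes coordinate [k]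
   separate whatever coordinates [k] and [m] separated. *)
Lemma shear_separates {N} (y : 'I_N -> vec) {k m} : k != m -> exists phi,
  [/\ attainable F (shear k m phi), attainable F (shear k m (fun s => - phi s)) &
    forall i i', shear k m phi (y i) k 0 = shear k m phi (y i') k 0 ->
      y i k 0 = y i' k 0 /\ y i m 0 = y i' m 0].
Proof.
move=> km; pose T := [seq y i m 0 | i <- enum 'I_N].
pose C := 1 + \sum_(p : 'I_N * 'I_N) `|y p.1 k 0 - y p.2 k 0|.
have [phi [Aphi Aphi' phi_val]] :=
  shear_interp k m (undup T) km (undup_uniq T) (fun v => C * (index v T)%:R).
exists phi; split=> // i i'; rewrite !shear_entry eqxx !mulr1.
have T_y i1 : y i1 m 0 \in T by apply: map_f; rewrite mem_enum.
rewrite !phi_val ?mem_undup //.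
have [ym|ym] := eqVneq (y i m 0) (y i' m 0); first by rewrite ym => /addIr.
move=> E; exfalso.
have idx : index (y i m 0) T != index (y i' m 0) T.
  by apply: contra ym => /eqP Ei; rewrite -(nth_index 0 (T_y i)) Ei nth_index.
have spread : `|y i' k 0 - y i k 0| <= C - 1.
  rewrite /C addrAC subrr add0r (bigD1 (i', i)) //= lerDl.
  by apply: sumr_ge0.
have C_gt0 : 0 < C by rewrite ltr_wpDr // sumr_ge0.
have E' : C * ((index (y i m 0) T)%:R - (index (y i' m 0) T)%:R) = y i' k 0 - y i k 0.
  by rewrite mulrBr; lra.
have : C <= `|y i' k 0 - y i k 0|.
  by rewrite -E' normrM gtr0_norm // -[leLHS]mulr1 ler_pM2l //; exact: natr_dist_ge1.
by lra.
Qed.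

Lemma separating_coord {N} (z : 'I_N -> vec) k (ms : seq 'I_d) : exists Phi,
  [/\ attainable_bij Phi, forall x l, l != k -> Phi x l 0 = x l 0 &
    forall i i', Phi (z i) k 0 = Phi (z i') k 0 ->
      z i k 0 = z i' k 0 /\ {in ms, forall m, z i m 0 = z i' m 0}].
Proof.
elim: ms => [|m ms [Phi [[Psi [APhi APsi PhiK]] Phi_fix sep]]].
  by exists id; split=> //; exists id; split=> //; exact: attainable_id.
have [mk|mk] := eqVneq m k.
  exists Phi; split => //; first by exists Psi.
  move=> i i' /sep[zk zms]; split=> // m'.
  by rewrite inE => /predU1P[->|]; [rewrite mk | exact: zms].
have km : k != m by rewrite eq_sym.
have [phi [Aphi Aphi' sep']] := shear_separates (Phi \o z) km.
exists (shear k m phi \o Phi); split.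
- exists (Psi \o shear k m (fun s => - phi s)); split; try exact: attainable_comp.
  by move=> x /=; rewrite shearK ?PhiK // eq_sym.
- by move=> x l lk; rewrite /= shear_fix // Phi_fix.
move=> i i' /sep' [/sep [zk zms] ym]; split => // m'.
rewrite inE => /predU1P[->|]; last exact: zms.
by move: ym; rewrite /= !Phi_fix.
Qed.

Lemma injective_separating_coord {N} (z : 'I_N -> vec) k : injective z ->
  exists Phi, attainable_bij Phi /\ injective (fun i => Phi (z i) k 0).
Proof.
move=> z_inj; have [Phi [APhi _ sep]] := separating_coord z k (enum 'I_d).
exists Phi; split=> // i i' /sep [_ zms]; apply: z_inj; apply/matrixP => m l.
by rewrite (ord1 l) zms ?mem_enum.
Qed.

Lemma attainable_set_coord {N} {w : 'I_N -> vec} {k m} (v : 'I_N -> R) : k != m ->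
  injective (fun i => w i m 0) ->
  exists Phi, attainable F Phi /\ forall i, Phi (w i) = w i + (v i - w i k 0) *: delta_mx k 0.
Proof.
move=> km w_inj; pose nodes := [seq w i m 0 | i <- enum 'I_N].
pose val s := if [pick i | w i m 0 == s] is Some i then v i - w i k 0 else 0.
have uniq_nodes : uniq nodes by rewrite map_inj_uniq ?enum_uniq.
have [phi [Aphi _ phi_val]] := shear_interp k m nodes km uniq_nodes val.
exists (shear k m phi); split => // i.
rewrite /shear phi_val; last by apply: map_f; rewrite mem_enum.
rewrite /val; case: pickP => [i' /eqP/w_inj -> //|/(_ i)].
by rewrite eqxx.
Qed.

Lemma attainable_match {N} (w z : 'I_N -> vec) k : injective (fun i => w i k 0) ->
  (forall i, w i k 0 = z i k 0) -> exists Phi, attainable F Phi /\ forall i, Phi (w i) = z i.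
Proof.
move=> w_inj wz.
suff [Phi [APhi Phi_k Phi_ms]] : exists Phi, [/\ attainable F Phi,
    forall i, Phi (w i) k 0 = w i k 0 &
    forall i, {in enum 'I_d, forall m, Phi (w i) m 0 = z i m 0}].
  exists Phi; split => // i; apply/matrixP => m l.
  by rewrite (ord1 l) Phi_ms ?mem_enum.
elim: (enum 'I_d) => [|m ms [Phi [APhi Phi_k Phi_ms]]].
  by exists id; split => //; exact: attainable_id.
have [mk|mk] := eqVneq m k.
  exists Phi; split => // i m'; rewrite inE => /predU1P[->|]; last exact: Phi_ms.
  by rewrite mk Phi_k wz.
have w'_inj : injective (fun i => Phi (w i) k 0) by move=> i i' /=; rewrite !Phi_k; exact: w_inj.
have [Psi [APsi Psi_w]] := attainable_set_coord (fun i => z i m 0) mk w'_inj.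
exists (Psi \o Phi); split; first exact: attainable_comp.
  by move=> i; rewrite /= Psi_w !mxE eq_sym (negbTE mk) mulr0 addr0 Phi_k.
move=> i m'; rewrite /= Psi_w !mxE andbT inE => /predU1P[->|m'ms].
  by rewrite eqxx mulr1 addrC subrK.
have [->|_] := eqVneq m' m; first by rewrite mulr1 addrC subrK.
by rewrite mulr0 addr0 Phi_ms.
Qed.

Lemma nonaffine_exact_interpolation : (2 <= d)%N -> exact_universal_interpolation F.
Proof.
move=> d2 N _ xs ys xs_inj ys_inj.
pose i0 : 'I_d := Ordinal (ltnW d2); pose i1 : 'I_d := Ordinal d2.
have i01 : i0 != i1 by [].
have i10 : i1 != i0 by [].
have [Phx [[_ [APhx _ _]] x_sep]] := injective_separating_coord xs i0 xs_inj.
have [Phy [[Phy' [_ APhy' PhyK]] y_sep]] := injective_separating_coord ys i0 ys_inj.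
have [PA [APA PA_E]] := attainable_set_coord (fun i => (nat_of_ord i)%:R) i10 x_sep.
pose w2 i := PA (Phx (xs i)).
have w2_i1 i : w2 i i1 0 = (nat_of_ord i)%:R by rewrite /w2 PA_E !mxE eqxx mulr1 addrC subrK.
have w2_inj : injective (fun i => w2 i i1 0).
  by move=> i i' /=; rewrite !w2_i1 => /eqP; rewrite eqr_nat => /eqP /val_inj.
have [PB [APB PB_E]] := attainable_set_coord (fun i => Phy (ys i) i0 0) i01 w2_inj.
pose w3 i := PB (w2 i).
have w3_i0 i : w3 i i0 0 = Phy (ys i) i0 0 by rewrite /w3 PB_E !mxE eqxx mulr1 addrC subrK.
have w3_inj : injective (fun i => w3 i i0 0) by move=> i i' /=; rewrite !w3_i0; exact: y_sep.
have [PC [APC PC_E]] := attainable_match w3 (fun i => Phy (ys i)) i0 w3_inj w3_i0.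
have [s [Fs s_flow]] : attainable F (Phy' \o PC \o PB \o PA \o Phx).
  by do 4!apply: attainable_comp => //.
(* a null first step makes the control sequence nonempty *)
exists ((shear_field f j i0 i1 0 0 0, 1) :: s); split => //; split.
  move=> p; rewrite inE => /predU1P[-> | /Fs //].
  by split; [exact: (F_shear_field F f j F_aff Ff) | exact: ler01].
move=> i /=; exists (xs i); split.
  by have := is_flow_shear_field f j i0 i1 0 0 0 (xs i) i01; rewrite /shear mul0r scale0r addr0.
by have := s_flow (xs i); rewrite /= PC_E PhyK.
Qed.

End Steering.

Section AffineFlows.
Context {R : realType}.

Lemma mul_sqr_bound (g a b E : R) : a ^+ 2 <= E -> b ^+ 2 <= E -> g * (a * b) <= `|g| * E.
Proof.
move=> aE bE; have := sqr_ge0 (a - b); have := sqr_ge0 (a + b) => ? ?.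
have [g_ge0 | g_lt0] := lerP 0 g.
  by rewrite ger0_norm // ler_wpM2l //; nra.
by rewrite ltr0_norm //; nra.
Qed.

(* [E * exp (- c s)] is nonincreasing and starts at [0]. *)
Lemma deriv_le_scale_eq0 {E dE : R -> R} {c : R} :
  (forall s, is_derive s (1 : R) E (dE s)) -> (forall s, 0 <= E s) ->
  (forall s, dE s <= c * E s) -> E 0 = 0 -> forall t, 0 <= t -> E t = 0.
Proof.
move=> DE E_ge0 dE_le E0 t; rewrite le_eqVlt => /predU1P[<- // | t_gt0].
pose phi s := E s * expR (0 + - c * s).
have Dphi s : is_derive s (1 : R) phi
    (E s * (expR (0 + - c * s) * - c) + expR (0 + - c * s) * dE s).
  by apply: is_derive_ext (is_deriveM (DE s) (is_derive_comp_affine (is_derive_expR _))).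
have [|x _] := MVT t_gt0 (fun x _ => Dphi x).
  apply/continuous_subspaceT => r; apply/differentiable_continuous/derivable1_diffP.
  by case: (Dphi r).
rewrite /phi E0 mul0r !subr0 => phi_t.
have : phi t <= 0.
  rewrite /phi phi_t mulr_le0_ge0 ?(ltW t_gt0) //.
  rewrite (_ : _ + _ = expR (0 + - c * x) * (dE x - c * E x)); last by ring.
  by rewrite pmulr_rle0 ?expR_gt0 // subr_le0.
rewrite /phi pmulr_lle0 ?expR_gt0 // => Et.
by apply/eqP; rewrite eq_le Et E_ge0.
Qed.

Context {d : nat}.
Local Notation vec := 'cV[R]_d.

(* Energy estimate: [E = \sum_i w_i ^ 2] satisfies [E' <= 2 M E]. *)
Lemma linear_ode_eq0 {G : 'M[R]_d} {w : R -> vec} :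
  (forall s, is_derive s (1 : R) w (G *m w s)) -> w 0 = 0 ->
  forall t, 0 <= t -> w t = 0.
Proof.
move=> Dw w0 t t_ge0.
pose E s := \sum_(i <- index_enum 'I_d) w s i 0 * w s i 0.
pose dE s := \sum_(i <- index_enum 'I_d) (w s i 0 * (G *m w s) i 0 + w s i 0 * (G *m w s) i 0).
pose M := \sum_(i <- index_enum 'I_d) \sum_(l <- index_enum 'I_d) `|G i l|.
have DE s : is_derive s (1 : R) E (dE s).
  apply: (@is_derive_sum_seq _ _ _ (fun i y => w y i 0 * w y i 0)
    (fun i y => w y i 0 * (G *m w y) i 0 + w y i 0 * (G *m w y) i 0)) => i.
  have Di := (is_derive_mxP _ _ _).1 (Dw s) i 0.
  by have := is_deriveM Di Di; apply: is_derive_ext.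
have E_ge0 s : 0 <= E s by apply: sumr_ge0 => i _; rewrite -expr2 sqr_ge0.
have sqr_le_E s i : w s i 0 ^+ 2 <= E s.
  rewrite /E (bigD1_seq i) ?mem_index_enum ?index_enum_uniq //= expr2 lerDl.
  by apply: sumr_ge0 => l _; rewrite -expr2 sqr_ge0.
have dE_le s : dE s <= (M + M) * E s.
  rewrite /dE big_split /= mulrDl.
  suff half : \sum_(i <- index_enum 'I_d) w s i 0 * (G *m w s) i 0 <= M * E s by apply: lerD.
  rewrite /M mulr_suml; apply: ler_sum => i _; rewrite mxE mulr_sumr mulr_suml.
  apply: ler_sum => l _; rewrite mulrCA; exact: mul_sqr_bound.
have Et := deriv_le_scale_eq0 DE E_ge0 dE_le _ t t_ge0.
apply/matrixP => i l; rewrite (ord1 l) mxE; apply/eqP; rewrite -sqrf_eq0 eq_le sqr_ge0 andbT.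
by rewrite -(Et _) ?sqr_le_E // /E w0 big1 // => k _; rewrite mxE mul0r.
Qed.

(* Uniqueness for the linear equation satisfied by the difference of a
   solution and an affine combination of two others. *)
Lemma is_flow_affine_comb {G : 'M[R]_d} {c : vec} {g : vec -> vec} {t th : R} {a a' b b' e' : vec} :
  (forall x, g x = G *m x + c) -> 0 <= t ->
  is_flow g t a a' -> is_flow g t b b' -> is_flow g t ((1 - th) *: a + th *: b) e' ->
  e' = (1 - th) *: a' + th *: b'.
Proof.
move=> gE t_ge0 [X [X0 [Xt DX]]] [Y [Y0 [Yt DY]]] [Z [Z0 [Zt DZ]]].
pose v s := Z s - ((1 - th) *: X s + th *: Y s).
have Dv s : is_derive s (1 : R) v (G *m v s).
  have := is_deriveB (DZ s) (is_deriveD (is_deriveZ (1 - th) (DX s)) (is_deriveZ th (DY s))).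
  rewrite (_ : g (Z s) - _ = G *m v s); first by apply: is_derive_ext.
  rewrite !gE /v mulmxBr mulmxDr -!scalemxAr.
  by apply/matrixP => i l; rewrite !mxE; ring.
have v0 : v 0 = 0 by rewrite /v X0 Y0 Z0 subrr.
have := linear_ode_eq0 Dv v0 t t_ge0.
by rewrite /v Xt Yt Zt => /eqP; rewrite subr_eq0 => /eqP.
Qed.

Lemma components_affine_mx {g : vec -> vec} : (forall j, component_affine g j) ->
  exists (G : 'M[R]_d) (c : vec), forall x, g x = G *m x + c.
Proof.
move=> g_aff; have ac_ex j : exists p : vec * R, forall x, g x j 0 = (p.1^T *m x) 0 0 + p.2.
  by have [a [c ac]] := g_aff j; exists (a, c).
have [ac ac_g] := choice ac_ex.
exists (\matrix_(j, i) (ac j).1 i 0), (\col_j (ac j).2) => x.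
apply/matrixP => j l; rewrite (ord1 l) ac_g !mxE; congr (_ + _).
by apply: eq_bigr => i _; rewrite !mxE.
Qed.

Lemma comp_flow_affine_comb {s : seq ((vec -> vec) * R)} {th : R} {a a' b b' e' : vec} :
  (forall p, p \in s -> (exists (G : 'M[R]_d) (c : vec), p.1 =1 fun x => G *m x + c) /\ 0 <= p.2) ->
  comp_flow s a a' -> comp_flow s b b' -> comp_flow s ((1 - th) *: a + th *: b) e' ->
  e' = (1 - th) *: a' + th *: b'.
Proof.
elim: s a b => [|[g t] s IH] a b /= s_aff; first by move=> <- <- <-.
move=> [a1 [ga sa]] [b1 [gb sb]] [e1 [ge se]].
have [[G [c gE]] t_ge0] := s_aff (g, t) (mem_head _ _).
apply: IH sa sb _ => [p ps|]; first by apply: s_aff; rewrite in_cons ps orbT.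
by rewrite -(is_flow_affine_comb gE t_ge0 ga gb ge).
Qed.

Lemma affine_no_exact_interpolation (F : set (vec -> vec)) : (2 <= d)%N ->
  (forall f, F f -> forall j, component_affine f j) -> ~ exact_universal_interpolation F.
Proof.
move=> d2 F_aff EUI.
pose i0 : 'I_d := Ordinal (ltnW d2); pose i1 : 'I_d := Ordinal d2.
pose xs (i : 'I_3) : vec := i%:R *: delta_mx i0 0.
pose ys (i : 'I_3) : vec :=
  (i == 1 :> nat)%:R *: delta_mx i0 0 + (i == 2 :> nat)%:R *: delta_mx i1 0.
have ys_i1 i : ys i i1 0 = (i == 2 :> nat)%:R by rewrite !mxE /= mulr0 add0r mulr1.
have xs_inj : injective xs.
  move=> i i' /(congr1 (fun v : vec => v i0 0)); rewrite !mxE /= !mulr1.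
  by move/eqP; rewrite eqr_nat => /eqP /val_inj.
have ys_inj : injective ys.
  move=> i i' /[dup] /(congr1 (fun v : vec => v i0 0)) + /(congr1 (fun v : vec => v i1 0)).
  rewrite !mxE /= !mulr1 !mulr0 !addr0 !add0r => /eqP + /eqP; rewrite !eqr_nat.
  by move: i i' => [[|[|[|?]]] ?] [[|[|[|?]]] ?] //= _ _; apply: val_inj.
have [s [_ [F_s s_flow]]] := EUI 3%N isT xs ys xs_inj ys_inj.
have s_aff p : p \in s -> (exists G c, p.1 =1 fun x => G *m x + c) /\ 0 <= p.2.
  move=> /F_s [Fp t_ge0]; split=> //.
  by have [G [c gE]] := components_affine_mx (F_aff _ Fp); exists G, c.
have xs2 : xs 2 = (1 - 2) *: xs 0 + 2 *: xs 1.
  by apply/matrixP => i l; rewrite !mxE /= !modn_small //; ring.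
have := s_flow 2; rewrite xs2 => /(comp_flow_affine_comb s_aff (s_flow 0) (s_flow 1)).
have comb_i1 : ((1 - 2) *: ys 0 + 2 *: ys 1) i1 0 = 0 by rewrite !mxE /=; ring.
by move=> /(congr1 (fun v : vec => v i1 0)) /eqP; rewrite ys_i1 comb_i1 oner_eq0.
Qed.

End AffineFlows.

Theorem theorem2p6 (R : realType) (d : nat) (F : set ('cV[R]_d -> 'cV[R]_d)) :
  (2 <= d)%N ->
  (forall f, F f -> globally_lipschitz f) ->
  affine_invariant F ->
  (exact_universal_interpolation F <->
   exists f, F f /\ exists j : 'I_d, ~ component_affine f j).
Proof.
move=> d2 lipschitz F_aff; split => [EUI | [f [Ff [j nonaffine]]]].
  apply: contrapT => all_affine; apply: (affine_no_exact_interpolation F d2 _ EUI) => f Ff j.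
  by apply: contrapT => nonaffine; apply: all_affine; exists f; split => //; exists j.
have [K fL] := lipschitz f Ff.
exact: nonaffine_exact_interpolation F f j K F_aff Ff fL nonaffine d2.
Qed.
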